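(* Let $S$ be a smooth surface in $\mathbb{R}^3$ which satisfies $aH + bK = c$ for some real constants $a,b,c$ with $a^2+b^2\neq 0$, where $H$ and $K$ denote the mean curvature and the Gauss curvature of $S$. Suppose $S$ is foliated by pieces of circles lying in a one-parameter family of parallel planes. Then either $S$ is a piece of a surface of revolution, or $S$ is part of one of the Riemann minimal examples, or $S$ is part of a generalized cone.
   Context: A generalized cone is a surface foliated by circles in parallel planes whose centres lie on a straight line and whose radius is a linear function; locally, after a rigid motion, it can be parametrized by $\mathbf{X}(u,v) = (f(u), g(u), u) + r(u)(\cos v, \sin v, 0)$ with $f$, $g$ and $r>0$ linear (affine) functions of $u$. It has $K=0$. The Riemann minimal examples are the minimal surfaces ($H=0$) discovered by Riemann which are foliated by circles in parallel planes but are not surfaces of revolution; locally, after a rigid motion, they are parametrized as $\mathbf{X}(u,v) = (f(u), g(u), u) + r(u)(\cos v, \sin v, 0)$ with $f' = \lambda r^2$, $g' = \mu r^2$ for constants $\lambda,\mu$ with $\lambda^2+\mu^2\neq 0$, and $1+(\lambda^2+\mu^2)r^4 + r'^2 - r r'' = 0$. The circles in parallel planes are not assumed a priori to be coaxial. *)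

From Stdlib Require Import Reals.
From Coquelicot Require Import Coquelicot.
Open Scope R_scope.

Definition v3 := (R * R * R)%type.
Definition c1 (p : v3) : R := fst (fst p).
Definition c2 (p : v3) : R := snd (fst p).
Definition c3 (p : v3) : R := snd p.
Definition dot (p q : v3) : R := c1 p * c1 q + c2 p * c2 q + c3 p * c3 q.
Definition cross (p q : v3) : v3 :=
  (c2 p * c3 q - c3 p * c2 q, c3 p * c1 q - c1 p * c3 q, c1 p * c2 q - c2 p * c1 q).
Definition vnorm (p : v3) : R := sqrt (dot p p).
Definition vscal (k : R) (p : v3) : v3 := (k * c1 p, k * c2 p, k * c3 p).

Definition dvec (h : R -> v3) (t : R) : v3 :=
  (Derive (fun s => c1 (h s)) t, Derive (fun s => c2 (h s)) t,
   Derive (fun s => c3 (h s)) t).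

Definition Xu (X : R -> R -> v3) (u v : R) : v3 := dvec (fun s => X s v) u.
Definition Xv (X : R -> R -> v3) (u v : R) : v3 := dvec (fun s => X u s) v.
Definition Xuu (X : R -> R -> v3) (u v : R) : v3 := dvec (fun s => Xu X s v) u.
Definition Xuv (X : R -> R -> v3) (u v : R) : v3 := dvec (fun s => Xu X u s) v.
Definition Xvv (X : R -> R -> v3) (u v : R) : v3 := dvec (fun s => Xv X u s) v.

Definition unit_normal (X : R -> R -> v3) (u v : R) : v3 :=
  vscal (/ vnorm (cross (Xu X u v) (Xv X u v))) (cross (Xu X u v) (Xv X u v)).

Definition fE X u v := dot (Xu X u v) (Xu X u v).
Definition fF X u v := dot (Xu X u v) (Xv X u v).
Definition fG X u v := dot (Xv X u v) (Xv X u v).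
Definition sL X u v := dot (Xuu X u v) (unit_normal X u v).
Definition sM X u v := dot (Xuv X u v) (unit_normal X u v).
Definition sN X u v := dot (Xvv X u v) (unit_normal X u v).

Definition gauss_curv (X : R -> R -> v3) (u v : R) : R :=
  (sL X u v * sN X u v - sM X u v ^ 2) / (fE X u v * fG X u v - fF X u v ^ 2).
Definition mean_curv (X : R -> R -> v3) (u v : R) : R :=
  (fE X u v * sN X u v - 2 * fF X u v * sM X u v + fG X u v * sL X u v)
  / (2 * (fE X u v * fG X u v - fF X u v ^ 2)).

Definition smooth_on (a b : R) (h : R -> R) : Prop :=
  forall (n : nat) (x : R), a < x < b -> ex_derive_n h n x.

(* Surface foliated by (pieces of) circles in the horizontal planes z = u:
   X(u,v) = (f(u), g(u), u) + r(u) (cos v, sin v, 0). *)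
Definition circle_surface (f g r : R -> R) : R -> R -> v3 :=
  fun u v => (f u + r u * cos v, g u + r u * sin v, u).

(* Surface of revolution: the circles are coaxial (centres on a vertical line). *)
Definition is_revolution (u0 u1 : R) (f g r : R -> R) : Prop :=
  exists f0 g0 : R, forall u, u0 < u < u1 -> f u = f0 /\ g u = g0.

Definition is_riemann_example (u0 u1 : R) (f g r : R -> R) : Prop :=
  exists lam mu : R, lam ^ 2 + mu ^ 2 <> 0 /\
    forall u, u0 < u < u1 ->
      Derive f u = lam * r u ^ 2 /\ Derive g u = mu * r u ^ 2 /\
      1 + (lam ^ 2 + mu ^ 2) * r u ^ 4 + Derive r u ^ 2
        - r u * Derive_n r 2 u = 0.

Definition is_generalized_cone (u0 u1 : R) (f g r : R -> R) : Prop :=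
  exists a1 b1 a2 b2 a3 b3 : R, forall u, u0 < u < u1 ->
    f u = a1 * u + b1 /\ g u = a2 * u + b2 /\ r u = a3 * u + b3.

(* With x = cos v and y = sin v, every partial derivative of X is affine in (x, y), and
   aH + bK = c becomes  a W S - 2 b Q = 2 c r S^4,  where P, Q, W are affine in (x, y) and
   S = sqrt (1 + P^2).  Squaring away S leaves a polynomial identity in (x, y) on an arc of
   the unit circle.  The half-angle substitution T = tan ((v - v0) / 2) turns it into a
   polynomial identity in T on an interval, so it also holds at T = i, where 1 + T^2
   vanishes: there only the top-degree terms survive, and they are products of the complex
   numbers l1 + i l2 attached to the linear forms l0 + l1 x + l2 y.  This forces f' = g' = 0
   (a surface of revolution) when c <> 0 or a b <> 0.  When a = 0 = c, Q vanishes, so f, g, r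
   are affine (a generalized cone).  When b = 0 = c, W vanishes: r f'' = 2 r' f' and
   r g'' = 2 r' g' give f' = lam r^2 and g' = mu r^2, and the constant term of W is the
   Riemann equation for r. *)

From Pilot Require Import Defs.
From Stdlib Require Import Reals Lra List.
From Coquelicot Require Import Coquelicot.
Import ListNotations.
Open Scope R_scope.

(** * Polynomials vanishing on an interval *)

Fixpoint peval (p : list R) (x : R) : R :=
  match p with [] => 0 | a :: q => a + x * peval q x end.

Fixpoint ceval (p : list R) (z : C) : C :=
  match p with [] => 0%C | a :: q => (RtoC a + z * ceval q z)%C end.

Fixpoint padd (p q : list R) : list R :=
  match p, q with
  | [], _ => q
  | _, [] => p
  | a :: p', b :: q' => (a + b) :: padd p' q'
  end.

Definition pscal (k : R) (p : list R) : list R := map (Rmult k) p.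

Fixpoint pmul (p q : list R) : list R :=
  match p with [] => [] | a :: p' => padd (pscal a q) (0 :: pmul p' q) end.

Lemma peval_add p q x : peval (padd p q) x = peval p x + peval q x.
Proof.
  revert q; induction p as [|a p IH]; intros [|b q]; simpl; try rewrite IH; ring.
Qed.

Lemma peval_scal k p x : peval (pscal k p) x = k * peval p x.
Proof. induction p as [|a p IH]; simpl; try rewrite IH; ring. Qed.

Lemma peval_mul p q x : peval (pmul p q) x = peval p x * peval q x.
Proof.
  induction p as [|a p IH]; simpl; [ring|].
  rewrite peval_add, peval_scal; simpl; rewrite IH; ring.
Qed.

Lemma ceval_add p q z : ceval (padd p q) z = (ceval p z + ceval q z)%C.
Proof.
  revert q; induction p as [|a p IH]; intros [|b q]; simpl;
    try rewrite IH; try rewrite RtoC_plus; ring.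
Qed.

Lemma ceval_scal k p z : ceval (pscal k p) z = (RtoC k * ceval p z)%C.
Proof. induction p as [|a p IH]; simpl; try rewrite IH, RtoC_mult; ring. Qed.

Lemma ceval_mul p q z : ceval (pmul p q) z = (ceval p z * ceval q z)%C.
Proof.
  induction p as [|a p IH]; simpl; [ring|].
  rewrite ceval_add, ceval_scal; simpl; rewrite IH. ring.
Qed.

Lemma continuous_peval p x : continuous (peval p) x.
Proof.
  induction p as [|a p IH]; simpl.
  - apply continuous_const.
  - apply (@continuous_plus R_UniformSpace R_AbsRing R_NormedModule (fun _ => a)).
    + apply continuous_const.
    + apply (@continuous_mult R_UniformSpace R_AbsRing (fun y => y));
        [apply continuous_id | exact IH].
Qed.

Lemma continuous_eq0_of_right_eq0 (h : R -> R) eps :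
  0 < eps -> continuous h 0 -> (forall T, 0 < T < eps -> h T = 0) -> h 0 = 0.
Proof.
  intros Heps Hh H0.
  destruct (Req_dec (h 0) 0) as [|Hne]; [assumption | exfalso].
  destruct (proj1 (filterlim_locally h (h 0)) Hh (mkposreal _ (Rabs_pos_lt _ Hne)))
    as [d Hd].
  set (T := Rmin (d / 2) (eps / 2)).
  assert (HT : 0 < T <= d / 2 /\ T <= eps / 2).
  { pose proof (cond_pos d). unfold T.
    split; [split|]; try apply Rmin_glb_lt; try apply Rmin_l; try apply Rmin_r; lra. }
  assert (Habs : Rabs (h T - h 0) < Rabs (h 0)).
  { apply (Hd T). change (Rabs (T - 0) < d). rewrite Rminus_0_r, Rabs_pos_eq; lra. }
  rewrite (H0 T) in Habs by lra. rewrite Rminus_0_l, Rabs_Ropp in Habs. lra.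
Qed.

Lemma ceval_eq0_of_peval_right_eq0 p eps :
  0 < eps -> (forall T, 0 < T < eps -> peval p T = 0) -> forall z, ceval p z = 0%C.
Proof.
  intros Heps. induction p as [|a p IH]; intros H0 z; simpl; [reflexivity|].
  assert (Ha : a = 0).
  { replace a with (peval (a :: p) 0) by (simpl; ring).
    exact (continuous_eq0_of_right_eq0 _ eps Heps (continuous_peval _ 0) H0). }
  rewrite IH, Ha; [ring|].
  intros T HT. specialize (H0 T HT). simpl in H0. rewrite Ha, Rplus_0_l in H0.
  apply Rmult_integral in H0 as [H0|H0]; [lra | exact H0].
Qed.

Lemma Cmult_eq0 z w : (z * w)%C = 0%C -> z = 0%C \/ w = 0%C.
Proof.
  intros H. apply (f_equal Cmod) in H. rewrite Cmod_mult, Cmod_0 in H.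
  apply Rmult_integral in H as [H|H]; [left | right]; apply Cmod_eq_0, H.
Qed.

Lemma Cpow_eq0 z n : (z ^ n)%C = 0%C -> z = 0%C.
Proof.
  induction n as [|n IH]; simpl; intros H.
  - apply (f_equal Re) in H. simpl in H. lra.
  - apply Cmult_eq0 in H as [H|H]; auto.
Qed.

Lemma RtoC_eq0 x : RtoC x = 0%C -> x = 0.
Proof. intros H. exact (f_equal Re H). Qed.

(** * Trigonometric identities on an arc *)

Definition trig_lin (l0 l1 l2 v : R) : R := l0 + l1 * cos v + l2 * sin v.

Lemma cos2_sin2 v : cos v ^ 2 + sin v ^ 2 = 1.
Proof. rewrite <- !Rsqr_pow2, Rplus_comm. apply sin2_cos2. Qed.

Lemma cos_sin_2atan T :
  cos (2 * atan T) = (1 - T ^ 2) / (1 + T ^ 2) /\ sin (2 * atan T) = 2 * T / (1 + T ^ 2).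
Proof.
  assert (Hs : sqrt (1 + T²) * sqrt (1 + T²) = 1 + T ^ 2).
  { rewrite sqrt_sqrt; unfold Rsqr; nra. }
  assert (Hp : 0 < sqrt (1 + T²)) by (apply sqrt_lt_R0; unfold Rsqr; nra).
  rewrite cos_2a, sin_2a, cos_atan, sin_atan, <- Hs.
  split; field; lra.
Qed.

Definition one_plus_sq : list R := [1; 0; 1].

Definition lin_poly (v0 l0 l1 l2 : R) : list R :=
  [l0 + l1 * cos v0 + l2 * sin v0; 2 * (l2 * cos v0 - l1 * sin v0);
   l0 - l1 * cos v0 - l2 * sin v0].

Lemma peval_one_plus_sq T : peval one_plus_sq T = 1 + T ^ 2.
Proof. simpl; ring. Qed.

Lemma peval_lin_poly v0 l0 l1 l2 T :
  peval (lin_poly v0 l0 l1 l2) T = (1 + T ^ 2) * trig_lin l0 l1 l2 (v0 + 2 * atan T).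
Proof.
  destruct (cos_sin_2atan T) as [Hc Hs].
  unfold trig_lin; rewrite cos_plus, sin_plus, Hc, Hs; simpl.
  field; nra.
Qed.

Lemma ceval_one_plus_sq_Ci : ceval one_plus_sq Ci = 0%C.
Proof. apply injective_projections; simpl; ring. Qed.

Lemma ceval_lin_poly_Ci v0 l0 l1 l2 :
  ceval (lin_poly v0 l0 l1 l2) Ci = (2 * (l1 + Ci * l2) * (cos v0 - Ci * sin v0))%C.
Proof. apply injective_projections; simpl; ring. Qed.

Lemma ceval_lin_poly_Ci_eq0 v0 l0 l1 l2 :
  ceval (lin_poly v0 l0 l1 l2) Ci = 0%C -> l1 = 0 /\ l2 = 0.
Proof.
  rewrite ceval_lin_poly_Ci. intros H.
  assert (Hre := f_equal Re H); assert (Him := f_equal Im H); simpl in Hre, Him.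
  pose proof (cos2_sin2 v0). split; nra.
Qed.

Hint Rewrite peval_add peval_scal peval_mul peval_one_plus_sq peval_lin_poly : peval.
Hint Rewrite ceval_add ceval_scal ceval_mul ceval_one_plus_sq_Ci : ceval.

Lemma half_angle_in_arc v0 v1 :
  v0 < v1 -> exists eps, 0 < eps /\ forall T, 0 < T < eps -> v0 < v0 + 2 * atan T < v1.
Proof.
  intros Hv. set (d := Rmin (v1 - v0) 1).
  assert (Hd : 0 < d <= v1 - v0 /\ d <= 1).
  { unfold d; split; [split|]; [apply Rmin_glb_lt | apply Rmin_l | apply Rmin_r]; lra. }
  pose proof PI2_1.
  exists (tan (d / 2)); split; [apply tan_gt_0; lra|].
  intros T HT.
  assert (0 < atan T) by (rewrite <- atan_0; apply atan_increasing; lra).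
  assert (atan T < d / 2)
    by (rewrite <- (atan_tan (d / 2)) by lra; apply atan_increasing; lra).
  lra.
Qed.

Lemma ceval_Ci_eq0_of_arc v0 v1 (p : list R) (n : nat) (h : R -> R) :
  v0 < v1 -> (forall v, v0 < v < v1 -> h v = 0) ->
  (forall T, peval p T = (1 + T ^ 2) ^ n * h (v0 + 2 * atan T)) ->
  ceval p Ci = 0%C.
Proof.
  intros Hv Hh Hp. destruct (half_angle_in_arc v0 v1 Hv) as [eps [Heps Harc]].
  apply (ceval_eq0_of_peval_right_eq0 p eps Heps).
  intros T HT. rewrite Hp, Hh by (apply Harc; exact HT). ring.
Qed.

Section Arc.
Variables v0 v1 : R.
Hypothesis Hv : v0 < v1.

Lemma arc_lin_eq0 l0 l1 l2 :
  (forall v, v0 < v < v1 -> trig_lin l0 l1 l2 v = 0) -> l0 = 0 /\ l1 = 0 /\ l2 = 0.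
Proof.
  intros H.
  assert (Hi : ceval (lin_poly v0 l0 l1 l2) Ci = 0%C).
  { apply (ceval_Ci_eq0_of_arc v0 v1 _ 1 _ Hv H).
    intros T. autorewrite with peval. ring. }
  destruct (ceval_lin_poly_Ci_eq0 _ _ _ _ Hi) as [-> ->].
  specialize (H ((v0 + v1) / 2) ltac:(lra)). unfold trig_lin in H.
  repeat split; lra.
Qed.

Lemma arc_quadratic_eq0 A B C' l0 l1 l2 : ~ (l1 = 0 /\ l2 = 0) ->
  (forall v, v0 < v < v1 ->
     A + B * trig_lin l0 l1 l2 v + C' * trig_lin l0 l1 l2 v ^ 2 = 0) ->
  A = 0 /\ B = 0 /\ C' = 0.
Proof.
  intros Hl H.
  set (D := one_plus_sq). set (P := lin_poly v0 l0 l1 l2).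
  assert (Hi : ceval (padd (pscal A (pmul D D))
                  (padd (pscal B (pmul D P)) (pscal C' (pmul P P)))) Ci = 0%C).
  { apply (ceval_Ci_eq0_of_arc v0 v1 _ 2 _ Hv H).
    intros T. unfold D, P. autorewrite with peval. ring. }
  assert (HC : C' = 0).
  { unfold D in Hi. autorewrite with ceval in Hi.
    assert (Hc : (RtoC C' * ceval P Ci ^ 2)%C = 0%C) by (rewrite <- Hi; ring).
    apply Cmult_eq0 in Hc as [Hc|Hc]; [exact (RtoC_eq0 _ Hc)|].
    exfalso. exact (Hl (ceval_lin_poly_Ci_eq0 _ _ _ _ (Cpow_eq0 _ _ Hc))). }
  subst C'.
  destruct (arc_lin_eq0 (A + B * l0) (B * l1) (B * l2)) as [H0 [H1 H2]].
  { intros v Hv'. rewrite <- (H v Hv'). unfold trig_lin. ring. }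
  assert (HB : B = 0).
  { destruct (Rmult_integral _ _ H1), (Rmult_integral _ _ H2); tauto. }
  subst B. repeat split; lra.
Qed.

Lemma arc_identity_const_P a b k p0 p1 p2 q0 q1 q2 w0 w1 w2 : k <> 0 ->
  (forall v, v0 < v < v1 ->
     a ^ 2 * trig_lin w0 w1 w2 v ^ 2 * (1 + trig_lin p0 p1 p2 v ^ 2)
     = (2 * b * trig_lin q0 q1 q2 v + k * (1 + trig_lin p0 p1 p2 v ^ 2) ^ 2) ^ 2) ->
  p1 = 0 /\ p2 = 0.
Proof.
  intros Hk H.
  set (D := one_plus_sq). set (P := lin_poly v0 p0 p1 p2).
  set (Q := lin_poly v0 q0 q1 q2). set (W := lin_poly v0 w0 w1 w2).
  set (S := padd (pmul D D) (pmul P P)).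
  set (D3 := pmul D (pmul D D)).
  set (Z := padd (pscal (2 * b) (pmul Q D3)) (pscal k (pmul S S))).
  assert (Hi : ceval (padd (pmul Z Z) (pscal (- a ^ 2) (pmul (pmul W W) (pmul S (pmul D D3)))))
                 Ci = 0%C).
  { apply (ceval_Ci_eq0_of_arc v0 v1 _ 8
             (fun v => (2 * b * trig_lin q0 q1 q2 v + k * (1 + trig_lin p0 p1 p2 v ^ 2) ^ 2) ^ 2
                       - a ^ 2 * trig_lin w0 w1 w2 v ^ 2 * (1 + trig_lin p0 p1 p2 v ^ 2)) Hv).
    - intros v Hv'. rewrite (H v Hv'). ring.
    - intros T. unfold Z, D3, S, W, Q, P, D. autorewrite with peval. ring. }
  unfold Z, D3, S, D in Hi. autorewrite with ceval in Hi.
  assert (Hc : (RtoC (k * k) * ceval P Ci ^ 8)%C = 0%C)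
    by (rewrite <- Hi, RtoC_mult; ring).
  apply (ceval_lin_poly_Ci_eq0 v0 p0), (Cpow_eq0 _ 8).
  apply Cmult_eq0 in Hc as [Hc|Hc]; [|exact Hc].
  exfalso. apply RtoC_eq0, Rmult_integral in Hc. tauto.
Qed.

Lemma arc_identity_const_P_or_W a b p0 p1 p2 q0 q1 q2 w0 w1 w2 : a <> 0 ->
  (forall v, v0 < v < v1 ->
     a ^ 2 * trig_lin w0 w1 w2 v ^ 2 * (1 + trig_lin p0 p1 p2 v ^ 2)
     = (2 * b * trig_lin q0 q1 q2 v) ^ 2) ->
  (p1 = 0 /\ p2 = 0) \/ (w1 = 0 /\ w2 = 0).
Proof.
  intros Ha H.
  set (D := one_plus_sq). set (P := lin_poly v0 p0 p1 p2).
  set (Q := lin_poly v0 q0 q1 q2). set (W := lin_poly v0 w0 w1 w2).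
  set (S := padd (pmul D D) (pmul P P)).
  assert (Hi : ceval (padd (pscal (a ^ 2) (pmul (pmul W W) S))
                           (pscal (- (2 * b) ^ 2) (pmul (pmul Q Q) (pmul D D)))) Ci = 0%C).
  { apply (ceval_Ci_eq0_of_arc v0 v1 _ 4
             (fun v => a ^ 2 * trig_lin w0 w1 w2 v ^ 2 * (1 + trig_lin p0 p1 p2 v ^ 2)
                       - (2 * b * trig_lin q0 q1 q2 v) ^ 2) Hv).
    - intros v Hv'. rewrite (H v Hv'). ring.
    - intros T. unfold S, W, Q, P, D. autorewrite with peval. ring. }
  unfold S, D in Hi. autorewrite with ceval in Hi.
  assert (Hc : (RtoC (a ^ 2) * (ceval P Ci * ceval W Ci) ^ 2)%C = 0%C)
    by (rewrite <- Hi; ring).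
  apply Cmult_eq0 in Hc as [Hc|Hc].
  - exfalso. exact (pow_nonzero a 2 Ha (RtoC_eq0 _ Hc)).
  - apply Cpow_eq0, Cmult_eq0 in Hc as [Hc|Hc]; [left | right];
      exact (ceval_lin_poly_Ci_eq0 _ _ _ _ Hc).
Qed.

End Arc.

(** * The curvature equation of a circle surface *)

Definition riemann0 (r r' r'' f' g' : R) : R := 1 + f' ^ 2 + g' ^ 2 + r' ^ 2 - r * r''.

(* [riemann1 r r' h' h'' = 0] says that [h' / r^2] is stationary. *)
Definition riemann1 (r r' h' h'' : R) : R := 2 * r' * h' - r * h''.

(* With [P = trig_lin r' f' g' v] the radial component of [X_u], [Q = trig_lin r'' f'' g'' v]
   that of [X_uu], [W = E - r Q] and [S = sqrt (1 + P^2) = |X_u x X_v| / r], this is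
   [aH + bK = c] multiplied by [2 r S^4]. *)
Definition circle_arc_equation (a b c r r' r'' f' f'' g' g'' v : R) : Prop :=
  a * trig_lin (riemann0 r r' r'' f' g') (riemann1 r r' f' f'') (riemann1 r r' g' g'') v
    * sqrt (1 + trig_lin r' f' g' v ^ 2)
  - 2 * b * trig_lin r'' f'' g'' v
  = 2 * c * r * sqrt (1 + trig_lin r' f' g' v ^ 2) ^ 4.

Lemma sqrt_1_plus_sq_pos x : 0 < sqrt (1 + x ^ 2).
Proof. apply sqrt_lt_R0. nra. Qed.

Lemma sqrt_1_plus_sq2 x : sqrt (1 + x ^ 2) ^ 2 = 1 + x ^ 2.
Proof. rewrite <- Rsqr_pow2, Rsqr_sqrt; nra. Qed.

Lemma riemann_coefficients_absurd a b r r' r'' f' g' : a <> 0 -> b <> 0 -> 0 < r ->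
  a ^ 2 * riemann0 r r' r'' f' g' ^ 2 * r ^ 2 = 4 * b ^ 2 * (r * r'' - 2 * r' ^ 2) ^ 2 ->
  b ^ 2 * (r * r'' - 2 * r' ^ 2) * r' = 0 ->
  a ^ 2 * riemann0 r r' r'' f' g' ^ 2 * r ^ 2 = 16 * b ^ 2 * r' ^ 2 -> False.
Proof.
  intros Ha Hb Hr HA HB HC.
  set (w := riemann0 r r' r'' f' g') in *. set (eta := r * r'' - 2 * r' ^ 2) in *.
  assert (Hb2 : 0 < b ^ 2) by (apply pow2_gt_0; exact Hb).
  assert (Her : eta * r' = 0).
  { apply (Rmult_eq_reg_l (b ^ 2)); [rewrite Rmult_0_r, <- HB; ring | lra]. }
  assert (Heta2 : eta ^ 2 = 4 * r' ^ 2) by (apply (Rmult_eq_reg_l (4 * b ^ 2)); lra).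
  assert (Hr' : r' = 0).
  { destruct (Req_dec r' 0) as [|Hne]; [assumption | exfalso].
    apply (pow_nonzero r' 4 Hne).
    replace (r' ^ 4) with (/ 4 * (eta * r') ^ 2) by (rewrite Rpow_mult_distr, Heta2; field).
    rewrite Her. ring. }
  assert (Heta : eta = 0) by (rewrite Hr' in Heta2; nra).
  assert (Hw : 0 < w).
  { unfold w, riemann0. unfold eta in Heta. rewrite Hr' in Heta |- *. nra. }
  pose proof (pow2_gt_0 a Ha); pose proof (pow_lt w 2 Hw); pose proof (pow_lt r 2 Hr).
  assert (0 < a ^ 2 * w ^ 2 * r ^ 2)
    by (apply Rmult_lt_0_compat; [apply Rmult_lt_0_compat|]; assumption).
  rewrite Hr' in HC. lra.
Qed.

Section CircleArcEquation.
Context {v0 v1 a b c r r' r'' f' f'' g' g'' : R}.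
Hypothesis Hv : v0 < v1.
Hypothesis Heq : forall v, v0 < v < v1 -> circle_arc_equation a b c r r' r'' f' f'' g' g'' v.

Let P v := trig_lin r' f' g' v.
Let Q v := trig_lin r'' f'' g'' v.
Let W v := trig_lin (riemann0 r r' r'' f' g') (riemann1 r r' f' f'') (riemann1 r r' g' g'') v.

Let circle_arc_equation_sq v : v0 < v < v1 ->
  a ^ 2 * W v ^ 2 * (1 + P v ^ 2) = (2 * b * Q v + 2 * c * r * (1 + P v ^ 2) ^ 2) ^ 2.
Proof.
  intros Hv'. specialize (Heq v Hv'). unfold circle_arc_equation in Heq. fold (P v) in Heq.
  rewrite <- (sqrt_1_plus_sq2 (P v)).
  replace ((sqrt (1 + P v ^ 2) ^ 2) ^ 2) with (sqrt (1 + P v ^ 2) ^ 4) by ring.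
  rewrite <- Heq. unfold W, Q. ring.
Qed.

Lemma circle_arc_rotational : 0 < r -> c <> 0 -> f' = 0 /\ g' = 0.
Proof.
  intros Hr Hc. apply (arc_identity_const_P v0 v1 Hv a b (2 * c * r) r' f' g' r'' f'' g''
                         (riemann0 r r' r'' f' g') (riemann1 r r' f' f'') (riemann1 r r' g' g'')).
  - intros H. apply Rmult_integral in H as [H|H]; [|lra].
    apply Rmult_integral in H as [H|H]; lra.
  - exact circle_arc_equation_sq.
Qed.

Lemma circle_arc_flat : a = 0 -> c = 0 -> b <> 0 -> r'' = 0 /\ f'' = 0 /\ g'' = 0.
Proof.
  intros Ha Hc Hb. apply (arc_lin_eq0 v0 v1 Hv).
  intros v Hv'. specialize (Heq v Hv'). unfold circle_arc_equation in Heq.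
  rewrite Ha, Hc in Heq.
  assert (H : 2 * b * Q v = 0) by (unfold Q; lra).
  apply Rmult_integral in H as [H|H]; [lra | exact H].
Qed.

Lemma circle_arc_minimal : b = 0 -> c = 0 -> a <> 0 ->
  riemann0 r r' r'' f' g' = 0 /\ riemann1 r r' f' f'' = 0 /\ riemann1 r r' g' g'' = 0.
Proof.
  intros Hb Hc Ha. apply (arc_lin_eq0 v0 v1 Hv).
  intros v Hv'. specialize (Heq v Hv'). unfold circle_arc_equation in Heq.
  rewrite Hb, Hc in Heq. fold (P v) (W v) in Heq.
  pose proof (sqrt_1_plus_sq_pos (P v)) as HS.
  assert (H : a * W v * sqrt (1 + P v ^ 2) = 0) by lra.
  apply Rmult_integral in H as [H|H]; [|lra].
  apply Rmult_integral in H as [H|H]; [lra | exact H].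
Qed.

Lemma circle_arc_rotational_ab : 0 < r -> c = 0 -> a <> 0 -> b <> 0 -> f' = 0 /\ g' = 0.
Proof.
  intros Hr Hc Ha Hb.
  assert (Hsq : forall v, v0 < v < v1 -> a ^ 2 * W v ^ 2 * (1 + P v ^ 2) = (2 * b * Q v) ^ 2).
  { intros v Hv'. rewrite (circle_arc_equation_sq v Hv'), Hc. ring. }
  destruct (arc_identity_const_P_or_W v0 v1 Hv a b r' f' g' r'' f'' g'' _ _ _ Ha Hsq)
    as [HP | [Hf Hg]]; [exact HP|].
  assert (Hdec : (f' = 0 /\ g' = 0) \/ ~ (f' = 0 /\ g' = 0))
    by (destruct (Req_dec f' 0), (Req_dec g' 0); tauto).
  destruct Hdec as [|HP]; [assumption | exfalso].
  set (w := riemann0 r r' r'' f' g'). set (eta := r * r'' - 2 * r' ^ 2).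
  (* with [W = w] constant, [r Q = eta + 2 r' P], so [Hsq] times [r^2] is quadratic in [P] *)
  destruct (arc_quadratic_eq0 v0 v1 Hv (a ^ 2 * w ^ 2 * r ^ 2 - 4 * b ^ 2 * eta ^ 2)
              (- 16 * b ^ 2 * eta * r') (a ^ 2 * w ^ 2 * r ^ 2 - 16 * b ^ 2 * r' ^ 2)
              r' f' g' HP) as [HA [HB HC]].
  { intros v Hv'. specialize (Hsq v Hv'). fold (P v).
    assert (HrQ : r * Q v = eta + 2 * r' * P v).
    { unfold riemann1 in Hf, Hg. unfold Q, P, eta, trig_lin.
      transitivity (r * r'' + (r * f'') * cos v + (r * g'') * sin v); [ring|].
      replace (r * f'') with (2 * r' * f') by lra.
      replace (r * g'') with (2 * r' * g') by lra. ring. }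
    replace (W v) with w in Hsq by (unfold W; rewrite Hf, Hg; unfold w, trig_lin; ring).
    transitivity (r ^ 2 * (a ^ 2 * w ^ 2 * (1 + P v ^ 2)) - (2 * b) ^ 2 * (r * Q v) ^ 2).
    - rewrite HrQ. ring.
    - rewrite Hsq. ring. }
  apply (riemann_coefficients_absurd a b r r' r'' f' g' Ha Hb Hr); fold w eta; lra.
Qed.

End CircleArcEquation.

(** * Curvatures of a surface foliated by horizontal circles *)

Ltac vsimpl := cbv [Defs.c1 Defs.c2 Defs.c3 fst snd dot cross vscal].

Section Curvatures.
Variables (X : R -> R -> v3) (u v r r' r'' f' f'' g' g'' : R).
Hypothesis Hr : 0 < r.
Hypothesis HXu : Xu X u v = (f' + r' * cos v, g' + r' * sin v, 1).
Hypothesis HXv : Xv X u v = (- (r * sin v), r * cos v, 0).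
Hypothesis HXuu : Xuu X u v = (f'' + r'' * cos v, g'' + r'' * sin v, 0).
Hypothesis HXuv : Xuv X u v = (- (r' * sin v), r' * cos v, 0).
Hypothesis HXvv : Xvv X u v = (- (r * cos v), - (r * sin v), 0).

Let P := trig_lin r' f' g' v.
Let S := sqrt (1 + P ^ 2).

Let S_pos : 0 < S.
Proof. apply sqrt_1_plus_sq_pos. Qed.

Lemma cross_Xu_Xv : cross (Xu X u v) (Xv X u v) = vscal r (- cos v, - sin v, P).
Proof.
  rewrite HXu, HXv. unfold P, trig_lin. vsimpl.
  f_equal; [f_equal; ring|].
  transitivity (r * (f' * cos v + g' * sin v + r' * (cos v ^ 2 + sin v ^ 2))); [ring|].
  rewrite cos2_sin2. ring.
Qed.

Lemma unit_normal_eq : unit_normal X u v = vscal (/ S) (- cos v, - sin v, P).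
Proof.
  pose proof S_pos. unfold unit_normal. rewrite cross_Xu_Xv.
  replace (vnorm (vscal r (- cos v, - sin v, P))) with (r * S).
  - vsimpl. f_equal; [f_equal|]; field; lra.
  - unfold vnorm.
    replace (dot _ _) with ((r * S) ^ 2); [rewrite sqrt_pow2; nra|].
    unfold S. vsimpl. rewrite Rpow_mult_distr, sqrt_1_plus_sq2, <- (cos2_sin2 v). ring.
Qed.

Lemma first_fundamental_form :
  fE X u v = 1 + f' ^ 2 + g' ^ 2 + r' ^ 2 + 2 * r' * (f' * cos v + g' * sin v) /\
  fF X u v = r * (g' * cos v - f' * sin v) /\ fG X u v = r ^ 2.
Proof.
  unfold fE, fF, fG. rewrite HXu, HXv. vsimpl.
  repeat split.
  - transitivity (1 + f' ^ 2 + g' ^ 2 + r' ^ 2 * (cos v ^ 2 + sin v ^ 2)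
                  + 2 * r' * (f' * cos v + g' * sin v)); [ring | rewrite cos2_sin2; ring].
  - ring.
  - transitivity (r ^ 2 * (cos v ^ 2 + sin v ^ 2)); [ring | rewrite cos2_sin2; ring].
Qed.

Lemma second_fundamental_form :
  sL X u v = - trig_lin r'' f'' g'' v / S /\ sM X u v = 0 /\ sN X u v = r / S.
Proof.
  pose proof S_pos.
  unfold sL, sM, sN. rewrite unit_normal_eq, HXuu, HXuv, HXvv. unfold trig_lin. vsimpl.
  repeat split.
  - transitivity (- (f'' * cos v + g'' * sin v + r'' * (cos v ^ 2 + sin v ^ 2)) / S);
      [field | rewrite cos2_sin2; field]; lra.
  - field. lra.
  - transitivity (r * (cos v ^ 2 + sin v ^ 2) / S); [field | rewrite cos2_sin2; field]; lra.
Qed.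

Lemma first_fundamental_det : fE X u v * fG X u v - fF X u v ^ 2 = r ^ 2 * S ^ 2.
Proof.
  destruct first_fundamental_form as [-> [-> ->]].
  unfold S. rewrite sqrt_1_plus_sq2. unfold P, trig_lin.
  transitivity (r ^ 2 * (1 + (r' + f' * cos v + g' * sin v) ^ 2)
                + r ^ 2 * (f' ^ 2 + g' ^ 2) * (1 - (cos v ^ 2 + sin v ^ 2))); [ring|].
  rewrite cos2_sin2. ring.
Qed.

Lemma gauss_curv_eq : gauss_curv X u v = - trig_lin r'' f'' g'' v / (r * S ^ 4).
Proof.
  pose proof S_pos. unfold gauss_curv.
  rewrite first_fundamental_det. destruct second_fundamental_form as [-> [-> ->]].
  field. lra.
Qed.

Lemma mean_curv_eq :
  mean_curv X u v = trig_lin (riemann0 r r' r'' f' g') (riemann1 r r' f' f'')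
                      (riemann1 r r' g' g'') v / (2 * r * S ^ 3).
Proof.
  pose proof S_pos. unfold mean_curv.
  rewrite first_fundamental_det. destruct second_fundamental_form as [-> [-> ->]].
  destruct first_fundamental_form as [-> [-> ->]].
  unfold riemann0, riemann1, trig_lin. field. lra.
Qed.

Lemma circle_arc_equation_of_curv a b c :
  a * mean_curv X u v + b * gauss_curv X u v = c ->
  circle_arc_equation a b c r r' r'' f' f'' g' g'' v.
Proof.
  pose proof S_pos. rewrite mean_curv_eq, gauss_curv_eq. intros <-.
  unfold circle_arc_equation. fold P S. field. lra.
Qed.

End Curvatures.

Lemma dvec_ext_loc (h k : R -> v3) t :
  locally t (fun s => h s = k s) -> dvec h t = dvec k t.
Proof.
  intros H. unfold dvec.
  f_equal; [f_equal|]; apply Derive_ext_loc;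
    apply (filter_imp (fun s => h s = k s)); try (intros s ->; reflexivity); exact H.
Qed.

Lemma dvec_triple (h1 h2 h3 : R -> R) t :
  dvec (fun s => (h1 s, h2 s, h3 s)) t = (Derive h1 t, Derive h2 t, Derive h3 t).
Proof. reflexivity. Qed.

Lemma Derive_plus_scal (h k : R -> R) x t : ex_derive h t -> ex_derive k t ->
  Derive (fun s => h s + k s * x) t = Derive h t + Derive k t * x.
Proof.
  intros. apply is_derive_unique. auto_derive; [tauto|]. rewrite !Rmult_1_l. reflexivity.
Qed.

Lemma Derive_cos_affine x y t : Derive (fun s => x + y * cos s) t = - (y * sin t).
Proof. apply is_derive_unique. auto_derive; auto. ring. Qed.

Lemma Derive_sin_affine x y t : Derive (fun s => x + y * sin s) t = y * cos t.
Proof. apply is_derive_unique. auto_derive; auto. ring. Qed.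

Lemma locally_open_interval u0 u1 u : u0 < u < u1 -> locally u (fun s => u0 < s < u1).
Proof.
  intros H. apply (open_and (fun s => u0 < s) (fun s => s < u1));
    [apply open_gt | apply open_lt | exact H].
Qed.

Lemma smooth_on_ex_derive u0 u1 h u : smooth_on u0 u1 h -> u0 < u < u1 -> ex_derive h u.
Proof. intros Hh Hu. exact (Hh 1%nat u Hu). Qed.

Lemma smooth_on_ex_derive2 u0 u1 h u :
  smooth_on u0 u1 h -> u0 < u < u1 -> ex_derive (Derive h) u.
Proof. intros Hh Hu. exact (Hh 2%nat u Hu). Qed.

Section CircleSurface.
Variables (u0 u1 : R) (f g r : R -> R).
Hypotheses (Hf : smooth_on u0 u1 f) (Hg : smooth_on u0 u1 g) (Hr : smooth_on u0 u1 r).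
Let X := circle_surface f g r.

Lemma Xu_circle_surface u v : u0 < u < u1 ->
  Xu X u v = (Derive f u + Derive r u * cos v, Derive g u + Derive r u * sin v, 1).
Proof.
  intros Hu. unfold Xu, X, circle_surface. rewrite dvec_triple.
  rewrite !Derive_plus_scal, Derive_id; eauto using smooth_on_ex_derive.
Qed.

Lemma Xv_circle_surface u v : Xv X u v = (- (r u * sin v), r u * cos v, 0).
Proof.
  unfold Xv, X, circle_surface. rewrite dvec_triple.
  rewrite Derive_cos_affine, Derive_sin_affine, Derive_const. reflexivity.
Qed.

Lemma Xuu_circle_surface u v : u0 < u < u1 ->
  Xuu X u v = (Derive (Derive f) u + Derive (Derive r) u * cos v,
               Derive (Derive g) u + Derive (Derive r) u * sin v, 0).
Proof.
  intros Hu. unfold Xuu.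
  rewrite (dvec_ext_loc _ (fun s => (Derive f s + Derive r s * cos v,
                                     Derive g s + Derive r s * sin v, 1))).
  - rewrite dvec_triple, !Derive_plus_scal, Derive_const; eauto using smooth_on_ex_derive2.
  - apply (filter_imp (fun s => u0 < s < u1)); [|exact (locally_open_interval u0 u1 u Hu)].
    intros s Hs. exact (Xu_circle_surface s v Hs).
Qed.

Lemma Xuv_circle_surface u v : u0 < u < u1 ->
  Xuv X u v = (- (Derive r u * sin v), Derive r u * cos v, 0).
Proof.
  intros Hu. unfold Xuv.
  rewrite (dvec_ext_loc _ (fun s => (Derive f u + Derive r u * cos s,
                                     Derive g u + Derive r u * sin s, 1))).
  - rewrite dvec_triple, Derive_cos_affine, Derive_sin_affine, Derive_const. reflexivity.
  - apply filter_forall. intros s. exact (Xu_circle_surface u s Hu).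
Qed.

Lemma Xvv_circle_surface u v : Xvv X u v = (- (r u * cos v), - (r u * sin v), 0).
Proof.
  unfold Xvv.
  rewrite (dvec_ext_loc _ (fun s => (0 + - r u * sin s, 0 + r u * cos s, 0))).
  - rewrite dvec_triple, Derive_cos_affine, Derive_sin_affine, Derive_const.
    f_equal; f_equal; ring.
  - apply filter_forall. intros s. rewrite Xv_circle_surface. f_equal; f_equal; ring.
Qed.

Lemma circle_surface_arc_equation a b c u v : u0 < u < u1 -> 0 < r u ->
  a * mean_curv X u v + b * gauss_curv X u v = c ->
  circle_arc_equation a b c (r u) (Derive r u) (Derive (Derive r) u)
    (Derive f u) (Derive (Derive f) u) (Derive g u) (Derive (Derive g) u) v.
Proof.
  intros Hu Hpos. apply circle_arc_equation_of_curv; auto using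
    Xu_circle_surface, Xv_circle_surface, Xuu_circle_surface, Xuv_circle_surface,
    Xvv_circle_surface.
Qed.

End CircleSurface.

(** * Integrating the pointwise conditions *)

Section Interval.
Variables u0 u1 : R.
Hypothesis Hu : u0 < u1.

Lemma eq_of_is_derive_0 (h : R -> R) :
  (forall x, u0 < x < u1 -> is_derive h x 0) ->
  forall x y, u0 < x < u1 -> u0 < y < u1 -> h x = h y.
Proof.
  intros Hd x y Hx Hy.
  destruct (Rtotal_order x y) as [Hxy | [-> | Hxy]]; [| reflexivity |].
  - apply (eq_is_derive h x y); [intros t Ht; apply Hd; lra | exact Hxy].
  - symmetry. apply (eq_is_derive h y x); [intros t Ht; apply Hd; lra | exact Hxy].
Qed.

Let m := (u0 + u1) / 2.

Let m_in : u0 < m < u1.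
Proof. unfold m. lra. Qed.

Lemma revolution_of_Derive_eq0 f g r : smooth_on u0 u1 f -> smooth_on u0 u1 g ->
  (forall u, u0 < u < u1 -> Derive f u = 0 /\ Derive g u = 0) ->
  is_revolution u0 u1 f g r.
Proof.
  intros Hf Hg H0. exists (f m), (g m). intros u Hu'.
  split; apply eq_of_is_derive_0; auto; intros x Hx; destruct (H0 x Hx) as [Hfx Hgx].
  - rewrite <- Hfx. apply Derive_correct, (smooth_on_ex_derive u0 u1); auto.
  - rewrite <- Hgx. apply Derive_correct, (smooth_on_ex_derive u0 u1); auto.
Qed.

Lemma affine_of_Derive2_eq0 h : smooth_on u0 u1 h ->
  (forall u, u0 < u < u1 -> Derive (Derive h) u = 0) ->
  exists a b, forall u, u0 < u < u1 -> h u = a * u + b.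
Proof.
  intros Hh H0.
  assert (Hslope : forall x, u0 < x < u1 -> Derive h x = Derive h m).
  { intros x Hx. apply eq_of_is_derive_0; auto. intros t Ht.
    rewrite <- (H0 t Ht). apply Derive_correct, (smooth_on_ex_derive2 u0 u1); auto. }
  exists (Derive h m), (h m - Derive h m * m). intros u Hu'.
  enough (E : h u - Derive h m * u = h m - Derive h m * m) by lra.
  apply (eq_of_is_derive_0 (fun x => h x - Derive h m * x)); auto. intros t Ht.
  auto_derive; [apply (smooth_on_ex_derive u0 u1); auto|].
  change (fun x => h x) with h. rewrite (Hslope t Ht). ring.
Qed.

Lemma Derive_eq_scal_sq_of_riemann1 h r : smooth_on u0 u1 h -> smooth_on u0 u1 r ->
  (forall u, u0 < u < u1 -> 0 < r u) ->
  (forall u, u0 < u < u1 ->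
     riemann1 (r u) (Derive r u) (Derive h u) (Derive (Derive h) u) = 0) ->
  exists lam, forall u, u0 < u < u1 -> Derive h u = lam * r u ^ 2.
Proof.
  intros Hh Hr Hpos H0.
  exists (Derive h m / r m ^ 2). intros u Hu'.
  assert (E : Derive h u / r u ^ 2 = Derive h m / r m ^ 2).
  { apply (eq_of_is_derive_0 (fun x => Derive h x / r x ^ 2)); auto. intros t Ht.
    specialize (Hpos t Ht). specialize (H0 t Ht). unfold riemann1 in H0.
    auto_derive.
    - repeat split;
        [apply (smooth_on_ex_derive2 u0 u1) | apply (smooth_on_ex_derive u0 u1) |]; auto.
      nra.
    - change (fun x => Derive h x) with (Derive h). change (fun x => r x) with r.
      assert (Hh2 : Derive (Derive h) t = 2 * Derive r t * Derive h t / r t)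
        by (apply (Rmult_eq_reg_l (r t)); [field_simplify; lra | lra]).
      rewrite Hh2. field. lra. }
  rewrite <- E. field. specialize (Hpos u Hu'). lra.
Qed.

Lemma generalized_cone_of_Derive2_eq0 f g r :
  smooth_on u0 u1 f -> smooth_on u0 u1 g -> smooth_on u0 u1 r ->
  (forall u, u0 < u < u1 ->
     Derive (Derive r) u = 0 /\ Derive (Derive f) u = 0 /\ Derive (Derive g) u = 0) ->
  is_generalized_cone u0 u1 f g r.
Proof.
  intros Hf Hg Hr H0.
  destruct (affine_of_Derive2_eq0 f Hf) as [a1 [b1 Ef]]; [apply H0|].
  destruct (affine_of_Derive2_eq0 g Hg) as [a2 [b2 Eg]]; [apply H0|].
  destruct (affine_of_Derive2_eq0 r Hr) as [a3 [b3 Er]]; [apply H0|].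
  exists a1, b1, a2, b2, a3, b3. auto.
Qed.

Lemma riemann_or_revolution f g r :
  smooth_on u0 u1 f -> smooth_on u0 u1 g -> smooth_on u0 u1 r ->
  (forall u, u0 < u < u1 -> 0 < r u) ->
  (forall u, u0 < u < u1 ->
     riemann0 (r u) (Derive r u) (Derive (Derive r) u) (Derive f u) (Derive g u) = 0 /\
     riemann1 (r u) (Derive r u) (Derive f u) (Derive (Derive f) u) = 0 /\
     riemann1 (r u) (Derive r u) (Derive g u) (Derive (Derive g) u) = 0) ->
  is_revolution u0 u1 f g r \/ is_riemann_example u0 u1 f g r.
Proof.
  intros Hf Hg Hr Hpos H0.
  destruct (Derive_eq_scal_sq_of_riemann1 f r Hf Hr Hpos) as [lam Hlam]; [apply H0|].
  destruct (Derive_eq_scal_sq_of_riemann1 g r Hg Hr Hpos) as [mu Hmu]; [apply H0|].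
  destruct (Req_dec (lam ^ 2 + mu ^ 2) 0) as [Hlm|Hlm].
  - left. apply revolution_of_Derive_eq0; auto. intros u Hu'.
    assert (lam = 0 /\ mu = 0) as [-> ->] by (split; nra).
    rewrite (Hlam u Hu'), (Hmu u Hu'). split; ring.
  - right. exists lam, mu. split; [exact Hlm|]. intros u Hu'.
    destruct (H0 u Hu') as [E _]. unfold riemann0 in E.
    rewrite (Hlam u Hu'), (Hmu u Hu') in E |- *.
    split; [reflexivity | split; [reflexivity |]].
    change (Derive_n r 2 u) with (Derive (Derive r) u). rewrite <- E. ring.
Qed.

End Interval.

Theorem theorem1p3 (a b c : R) (u0 u1 v0 v1 : R) (f g r : R -> R) :
  a ^ 2 + b ^ 2 <> 0 ->
  u0 < u1 -> v0 < v1 ->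
  smooth_on u0 u1 f -> smooth_on u0 u1 g -> smooth_on u0 u1 r ->
  (forall u, u0 < u < u1 -> 0 < r u) ->
  (forall u v, u0 < u < u1 -> v0 < v < v1 ->
     a * mean_curv (circle_surface f g r) u v
     + b * gauss_curv (circle_surface f g r) u v = c) ->
  is_revolution u0 u1 f g r \/ is_riemann_example u0 u1 f g r
  \/ is_generalized_cone u0 u1 f g r.
Proof.
  intros Hab Hu Hv Hf Hg Hr Hpos Hcurv.
  pose proof (fun u Hu' v Hv' => circle_surface_arc_equation u0 u1 f g r Hf Hg Hr a b c u v
                                   Hu' (Hpos u Hu') (Hcurv u v Hu' Hv')) as Heq.
  destruct (Req_dec c 0) as [Hc|Hc].
  2: { left. apply revolution_of_Derive_eq0; auto. intros u Hu'.
       exact (circle_arc_rotational Hv (Heq u Hu') (Hpos u Hu') Hc). }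
  destruct (Req_dec a 0) as [Ha|Ha]; [|destruct (Req_dec b 0) as [Hb|Hb]].
  - right; right. apply generalized_cone_of_Derive2_eq0; auto. intros u Hu'.
    apply (circle_arc_flat Hv (Heq u Hu') Ha Hc).
    intros Hb. apply Hab. rewrite Ha, Hb. ring.
  - destruct (riemann_or_revolution u0 u1 Hu f g r); auto. intros u Hu'.
    exact (circle_arc_minimal Hv (Heq u Hu') Hb Hc Ha).
  - left. apply revolution_of_Derive_eq0; auto. intros u Hu'.
    exact (circle_arc_rotational_ab Hv (Heq u Hu') (Hpos u Hu') Hc Ha Hb).
Qed.
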